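(* Let $1\le q<2$ and let $C_q$ and $\mathbf{T}_1$ be as in the context. If $\mathbf{y}\in\mathbb{R}^d\setminus\{\mathbf{x}_1,\dots,\mathbf{x}_m\}$, then $C_q(\mathbf{T}_1(\mathbf{y}))\le C_q(\mathbf{y})$, with equality only when $\mathbf{T}_1(\mathbf{y})=\mathbf{y}$.
   Context: Let $\mathbf{x}_1,\dots,\mathbf{x}_m\in\mathbb{R}^d$ be distinct data points, not all lying on a common affine line, and let $\eta_1,\dots,\eta_m>0$ be weights. For $1\le q<2$ define the cost $C_q(\mathbf{y})=\sum_{i=1}^m \eta_i^q\|\mathbf{y}-\mathbf{x}_i\|^q$ ($\|\cdot\|$ the Euclidean norm); it is strictly convex with a unique minimizer $\mathbf{M}$. For $\mathbf{y}\notin\{\mathbf{x}_i\}_{i=1}^m$ define the Weiszfeld map $\mathbf{T}_1(\mathbf{y})=\dfrac{\sum_{i=1}^m \eta_i^q\|\mathbf{y}-\mathbf{x}_i\|^{q-2}\mathbf{x}_i}{\sum_{i=1}^m \eta_i^q\|\mathbf{y}-\mathbf{x}_i\|^{q-2}}$. *)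

From mathcomp Require Import all_boot all_order all_algebra.
From mathcomp Require Import all_classical all_reals all_analysis.
Set Implicit Arguments. Unset Strict Implicit. Unset Printing Implicit Defensive.
Import Order.TTheory GRing.Theory Num.Theory.
Local Open Scope ring_scope.

Definition enorm (R : realType) (d : nat) (v : 'rV[R]_d) : R :=
  Num.sqrt (\sum_(j < d) v ord0 j ^+ 2).

Definition Cq (R : realType) (d m : nat) (q : R)
  (x : 'I_m -> 'rV[R]_d) (eta : 'I_m -> R) (y : 'rV[R]_d) : R :=
  \sum_(i < m) powR (eta i) q * powR (enorm (y - x i)) q.

(* Weiszfeld map T_1(y); used only for y not among the x_i. *)
Definition T1 (R : realType) (d m : nat) (q : R)
  (x : 'I_m -> 'rV[R]_d) (eta : 'I_m -> R) (y : 'rV[R]_d) : 'rV[R]_d :=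
  (\sum_(i < m) powR (eta i) q * powR (enorm (y - x i)) (q - 2))^-1 *:
  \sum_(i < m) ((powR (eta i) q * powR (enorm (y - x i)) (q - 2)) *: x i).

Definition on_common_line (R : realType) (d m : nat) (x : 'I_m -> 'rV[R]_d) : Prop :=
  exists (a b : 'rV[R]_d), forall i : 'I_m, exists t : R, x i = a + t *: b.

(* Majorize-minimize.  With the Weiszfeld weights w_i = eta_i^q ||y - x_i||^(q-2)
   one has C_q(y) = sum_i w_i ||y - x_i||^2, and by concavity of t |-> t^(q/2)
   every z satisfies C_q(z) <= (1 - q/2) C_q(y) + (q/2) sum_i w_i ||z - x_i||^2.
   T_1(y) is the w-weighted mean of the x_i, so by the parallel-axis identity
   sum_i w_i ||T_1(y) - x_i||^2 = C_q(y) - W ||y - T_1(y)||^2 with W = sum_i w_i.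
   Hence C_q(T_1(y)) <= C_q(y) - (q/2) W ||y - T_1(y)||^2, and W > 0. *)
From mathcomp Require Import all_boot all_order all_algebra.
From mathcomp Require Import all_classical all_reals all_analysis.
From mathcomp Require Import ring lra.

Set Implicit Arguments.
Unset Strict Implicit.
Import Order.TTheory GRing.Theory Num.Theory.
Local Open Scope ring_scope.

(* Young's inequality with the conjugate exponents 2/q and 2/(2-q). *)
Lemma powR_le_tangent (R : realType) (q a b : R) :
  0 < q -> q < 2 -> 0 < a -> 0 <= b ->
  b `^ q <= (1 - q / 2) * a `^ q + q / 2 * (a `^ (q - 2) * b ^+ 2).
Proof.
move=> q0 q2 a0 b0.
set p := 2 / q; set r := 2 / (2 - q).
have p0 : 0 < p by rewrite /p divr_gt0 //; lra.
have r0 : 0 < r by rewrite /r divr_gt0 //; lra.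
have pr : p^-1 + r^-1 = 1 by rewrite /p /r !invf_div; field; lra.
set X := b `^ q * a `^ (q * (q - 2) / 2).
set Y := a `^ (q * (2 - q) / 2).
have XY : X * Y = b `^ q.
  rewrite /X /Y -mulrA -powRD; last by apply/implyP => _; rewrite gt_eqF.
  have -> : q * (q - 2) / 2 + q * (2 - q) / 2 = 0 by field.
  by rewrite powRr0 mulr1.
have X0 : 0 <= X by rewrite mulr_ge0 ?powR_ge0.
have := conjugate_powR X0 (powR_ge0 a _ : 0 <= Y) p0 r0 pr.
rewrite XY /X /Y powRM ?powR_ge0 // -!powRrM.
have -> : q * p = 2%:R by rewrite /p; field; lra.
have -> : q * (q - 2) / 2 * p = q - 2 by rewrite /p; field; lra.
have -> : q * (2 - q) / 2 * r = q by rewrite /r; field; lra.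
have -> : p^-1 = q / 2 by rewrite /p invf_div.
have -> : r^-1 = 1 - q / 2 by rewrite /r invf_div; field; lra.
rewrite powR_mulrn // => /le_trans; apply; lra.
Qed.

Lemma enorm_sqr (R : realType) d (v : 'rV[R]_d) :
  enorm v ^+ 2 = \sum_j v ord0 j ^+ 2.
Proof. by rewrite /enorm sqr_sqrtr // sumr_ge0 // => j _; rewrite sqr_ge0. Qed.

Lemma enorm_eq0 (R : realType) d (v : 'rV[R]_d) : enorm v = 0 -> v = 0.
Proof.
move=> v0; have : \sum_j v ord0 j ^+ 2 = 0 by rewrite -enorm_sqr v0 expr0n.
move/psumr_eq0P => sq0; apply/matrixP => i j; rewrite (ord1 i) mxE.
by apply/eqP; rewrite -sqrf_eq0; apply/eqP; apply: sq0 => // k _; rewrite sqr_ge0.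
Qed.

Lemma enorm_gt0 (R : realType) d (v : 'rV[R]_d) : v != 0 -> 0 < enorm v.
Proof. by move=> v0; rewrite lt_neqAle sqrtr_ge0 andbT eq_sym; apply: contra_neq v0 => /enorm_eq0. Qed.

Definition wmean (R : fieldType) (V : lmodType R) m (w : 'I_m -> R) (x : 'I_m -> V) : V :=
  (\sum_i w i)^-1 *: \sum_i (w i *: x i).

Lemma wsum_sqr_split (R : fieldType) m (w : 'I_m -> R) (x : 'I_m -> R^o) (z : R) :
  \sum_i w i != 0 ->
  \sum_i w i * (z - x i) ^+ 2 =
  \sum_i w i * (wmean w x - x i) ^+ 2 + (\sum_i w i) * (z - wmean w x) ^+ 2.
Proof.
set W := \sum_i w i; set t := wmean w x => W0.
have cross : \sum_i w i * (t - x i) = 0.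
  rewrite (eq_bigr (fun i => t * w i - w i * x i)) => [|i _]; last by ring.
  rewrite sumrB -mulr_sumr /t /wmean /W [_ *: _]/= mulrC mulrA mulfV // mul1r.
  exact: subrr.
transitivity (\sum_i (w i * (t - x i) ^+ 2 + (z - t) ^+ 2 * w i
                      + 2 * (z - t) * (w i * (t - x i)))).
  by apply: eq_bigr => i _; ring.
rewrite !big_split /= -[X in _ + _ + X]mulr_sumr cross mulr0 addr0.
by rewrite -mulr_sumr mulrC.
Qed.

Lemma wsum_enorm_split (R : realType) d m (w : 'I_m -> R) (x : 'I_m -> 'rV[R]_d)
    (z : 'rV[R]_d) :
  \sum_i w i != 0 ->
  \sum_i w i * enorm (z - x i) ^+ 2 =
  \sum_i w i * enorm (wmean w x - x i) ^+ 2 + (\sum_i w i) * enorm (z - wmean w x) ^+ 2.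
Proof.
move=> W0; have coord j : wmean w x ord0 j = wmean w (fun i => x i ord0 j : R^o).
  rewrite /wmean !mxE summxE; congr (_ * _).
  by apply: eq_bigr => i _; rewrite mxE.
under eq_bigr => i _ do rewrite enorm_sqr mulr_sumr.
under [X in _ = X + _]eq_bigr => i _ do rewrite enorm_sqr mulr_sumr.
rewrite enorm_sqr mulr_sumr exchange_big [X in _ = X + _]exchange_big -big_split /=.
apply: eq_bigr => j _; under eq_bigr => i _ do rewrite !mxE.
rewrite (wsum_sqr_split (fun i => x i ord0 j) _ W0); congr (_ + _).
  by apply: eq_bigr => i _; rewrite -coord !mxE.
by rewrite -coord !mxE.
Qed.

Section Weiszfeld.
Variables (R : realType) (d m : nat) (q : R).
Variables (x : 'I_m -> 'rV[R]_d) (eta : 'I_m -> R).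

Definition weiszfeld_weight (y : 'rV[R]_d) (i : 'I_m) : R :=
  powR (eta i) q * powR (enorm (y - x i)) (q - 2).

Lemma T1_wmean y : T1 q x eta y = wmean (weiszfeld_weight y) x.
Proof. by []. Qed.

Lemma Cq_weighted y : (forall i, y != x i) ->
  Cq q x eta y = \sum_i weiszfeld_weight y i * enorm (y - x i) ^+ 2.
Proof.
move=> hy; apply: eq_bigr => i _.
have yx0 : 0 < enorm (y - x i) by rewrite enorm_gt0 // subr_eq0.
rewrite /weiszfeld_weight -mulrA -powR_mulrn ?sqrtr_ge0 // -powRD ?subrK //.
by apply/implyP => _; rewrite gt_eqF.
Qed.

Hypotheses (q0 : 0 < q) (q2 : q < 2).

Lemma Cq_le_majorant y z : (forall i, y != x i) ->
  Cq q x eta z <= (1 - q / 2) * Cq q x eta y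
                  + q / 2 * \sum_i weiszfeld_weight y i * enorm (z - x i) ^+ 2.
Proof.
move=> hy; rewrite /Cq !mulr_sumr -big_split /=; apply: ler_sum => i _.
have yx0 : 0 < enorm (y - x i) by rewrite enorm_gt0 // subr_eq0.
have := powR_le_tangent q0 q2 yx0 (sqrtr_ge0 _ : 0 <= enorm (z - x i)).
move/(ler_wpM2l (powR_ge0 (eta i) q)) => /le_trans; apply.
by rewrite /weiszfeld_weight le_eqVlt; apply/orP; left; apply/eqP; ring.
Qed.

Lemma Cq_T1_descent y : (forall i, y != x i) ->
  \sum_i weiszfeld_weight y i != 0 ->
  Cq q x eta (T1 q x eta y) <=
  Cq q x eta y - q / 2 * ((\sum_i weiszfeld_weight y i) * enorm (y - T1 q x eta y) ^+ 2).
Proof.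
move=> hy W0; apply: le_trans (Cq_le_majorant _ hy) _.
have := wsum_enorm_split x y W0; rewrite -T1_wmean -Cq_weighted // => ->.
by rewrite le_eqVlt; apply/orP; left; apply/eqP; ring.
Qed.

End Weiszfeld.

Theorem theorem1 (R : realType) (d m : nat) (q : R)
  (x : 'I_m -> 'rV[R]_d) (eta : 'I_m -> R)
  (hq1 : 1 <= q) (hq2 : q < 2)
  (hdistinct : injective x)
  (hnotline : ~ on_common_line x)
  (heta : forall i, 0 < eta i)
  (y : 'rV[R]_d) (hy : forall i, y != x i) :
  Cq q x eta (T1 q x eta y) <= Cq q x eta y /\
  (Cq q x eta (T1 q x eta y) = Cq q x eta y -> T1 q x eta y = y).
Proof.
have q0 : 0 < q by lra.
have q_half_gt0 : 0 < q / 2 by lra.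
have m_gt0 : (0 < m)%N.
  rewrite lt0n; apply/eqP => m0; apply: hnotline; exists 0, 0 => i.
  by have := ltn_ord i; rewrite {2}m0.
set w := weiszfeld_weight q x eta y.
have w0 i : 0 < w i.
  by rewrite mulr_gt0 ?powR_gt0 // enorm_gt0 // subr_eq0.
have W0 : 0 < \sum_i w i.
  by rewrite (bigD1 (Ordinal m_gt0)) //= ltr_pwDl // sumr_ge0 // => i _; rewrite ltW.
have := Cq_T1_descent q0 hq2 hy (lt0r_neq0 W0); rewrite -/w.
set N := enorm (y - T1 q x eta y) ^+ 2.
set gap := q / 2 * ((\sum_i w i) * N).
have gap_ge0 : 0 <= gap.
  exact: mulr_ge0 (ltW q_half_gt0) (mulr_ge0 (ltW W0) (sqr_ge0 _)).
set CT := Cq q x eta (T1 q x eta y); set Cy := Cq q x eta y => descent.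
clearbody CT Cy.
split; first lra.
move=> Ceq; have /eqP : gap = 0 by lra.
rewrite mulf_eq0 (gt_eqF q_half_gt0) mulf_eq0 (gt_eqF W0) sqrf_eq0.
by move=> /eqP/enorm_eq0/eqP; rewrite subr_eq0 => /eqP.
Qed.
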